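(* Let $(\mathfrak n,I,g)$ be a $\mathfrak k$-nilpotent triple with $\mathfrak k$ abelian, and $\mathsf N$ the corresponding simply-connected Lie group (with $I$ and $g$ extended to left-invariant tensor fields). Then $(\mathsf N,g)$ admits a metric connection $\nabla$ with parallel torsion and parallel curvature, whose torsion $T$ is totally skew-symmetric, and which satisfies $\nabla I=0$. Moreover, every central left-invariant vector field $U\in\mathfrak z(\mathfrak n)$ is $\nabla$-parallel, and $$g(T(X,Y),Z)=-g([X,Y],Z)-g([Y,Z],X)-g([Z,X],Y)$$ for all left-invariant vector fields $X,Y,Z\in\mathfrak n$.
   Context: $\mathfrak k$-nilpotent triple: given a compact Lie algebra $\mathfrak k$ with bi-invariant scalar product $\langle\cdot,\cdot\rangle_{\mathfrak k}$ and a finite-dimensional unitary representation $\varphi:\mathfrak k\to\mathfrak u(V,I,\langle\cdot,\cdot\rangle_V)$ without trivial submodules, it is $(\mathfrak n,I,g)$ where $\mathfrak n=\mathfrak k+V$ with only non-zero brackets $[v_1,v_2]\in\mathfrak k$ given by $\langle[v_1,v_2],K\rangle_{\mathfrak k}=\langle\varphi(K)v_1,v_2\rangle_V$ ($v_i\in V$, $K\in\mathfrak k$), $I$ is the complex structure on $V$ (the transverse complex structure, regarded as an endomorphism of $\mathfrak n$ vanishing on $\mathfrak k$), and $g=\langle\cdot,\cdot\rangle_{\mathfrak k}\oplus\langle\cdot,\cdot\rangle_V$. The centre of $\mathfrak n$ is $\mathfrak z(\mathfrak n)=\mathfrak k$. *)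

From HB Require Import structures.
From mathcomp Require Import all_boot all_order all_algebra.
From mathcomp Require Import reals.
Set Implicit Arguments. Unset Strict Implicit. Unset Printing Implicit Defensive.
Import Order.TTheory GRing.Theory Num.Theory.
Local Open Scope ring_scope.

Section Triple.
Variables (R : realType) (m n : nat).

Definition ip (k : nat) (G : 'M[R]_k) (x y : 'rV[R]_k) : R := (x *m G *m y^T) 0 0.

Definition scalar_product (k : nat) (G : 'M[R]_k) : Prop :=
  G^T = G /\ forall x : 'rV[R]_k, x != 0 -> 0 < ip G x x.

(* The representation phi : k = R^m -> End(V), phi(K) = sum_i K_i A_i,
   acting on row vectors v |-> v *m phi(K). *)
Definition phiM (A : 'I_m -> 'M[R]_n) (K : 'rV[R]_m) : 'M[R]_n :=
  \sum_(i < m) K 0 i *: A i.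
Definition act (A : 'I_m -> 'M[R]_n) (K : 'rV[R]_m) (v : 'rV[R]_n) : 'rV[R]_n :=
  v *m phiM A K.

(* the Lie algebra n = k + V, as pairs *)
Definition nT := ('rV[R]_m * 'rV[R]_n)%type.

Definition nbr (br : 'rV[R]_n -> 'rV[R]_n -> 'rV[R]_m) (X Y : nT) : nT :=
  (br X.2 Y.2, 0).

Definition ng (Gk : 'M[R]_m) (Gv : 'M[R]_n) (X Y : nT) : R :=
  ip Gk X.1 Y.1 + ip Gv X.2 Y.2.

Definition nI (J : 'M[R]_n) (X : nT) : nT := (0, X.2 *m J).

Definition central (br : 'rV[R]_n -> 'rV[R]_n -> 'rV[R]_m) (U : nT) : Prop :=
  forall X : nT, nbr br U X = 0.

(* A left-invariant connection on N is the same as a bilinear map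
   nab : n x n -> n, (X,Y) |-> nab_X Y. *)
Definition bilinear_conn (nab : nT -> nT -> nT) : Prop :=
  (forall (a : R) (X Y Z : nT), nab (a *: X + Y) Z = a *: nab X Z + nab Y Z) /\
  (forall (a : R) (X Y Z : nT), nab X (a *: Y + Z) = a *: nab X Y + nab X Z).

Definition torsion br (nab : nT -> nT -> nT) (X Y : nT) : nT :=
  nab X Y - nab Y X - nbr br X Y.

Definition curvature br (nab : nT -> nT -> nT) (X Y Z : nT) : nT :=
  nab X (nab Y Z) - nab Y (nab X Z) - nab (nbr br X Y) Z.

Definition metric_conn Gk Gv (nab : nT -> nT -> nT) : Prop :=
  forall X Y Z : nT, ng Gk Gv (nab X Y) Z + ng Gk Gv Y (nab X Z) = 0.

Definition parallel_torsion br (nab : nT -> nT -> nT) : Prop :=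
  forall W X Y : nT,
    nab W (torsion br nab X Y) - torsion br nab (nab W X) Y
      - torsion br nab X (nab W Y) = 0.

Definition parallel_curvature br (nab : nT -> nT -> nT) : Prop :=
  forall W X Y Z : nT,
    nab W (curvature br nab X Y Z) - curvature br nab (nab W X) Y Z
      - curvature br nab X (nab W Y) Z - curvature br nab X Y (nab W Z) = 0.

(* g(T(X,Y),Z) is totally skew-symmetric (T is already skew in X,Y) *)
Definition skew_torsion Gk Gv br (nab : nT -> nT -> nT) : Prop :=
  forall X Y Z : nT,
    ng Gk Gv (torsion br nab X Y) Z = - ng Gk Gv (torsion br nab X Z) Y.

Definition parallel_I J (nab : nT -> nT -> nT) : Prop :=
  forall X Y : nT, nab X (nI J Y) = nI J (nab X Y).

End Triple.

(* For abelian k, take the connection nabla_X Y := - phi(X_k) Y_V.  Each nabla_W is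
   then a derivation of the Lie bracket of n (the bracket V x V -> k is
   phi-invariant because the phi(K) commute) and of nabla itself (again because
   the phi(K) commute).  Torsion and curvature are built out of the bracket and
   nabla, so every nabla_W is a derivation of them too, i.e. they are parallel.
   Metricity and nabla I = 0 say that phi takes values in u(V, I, g); the torsion
   formula is a direct computation from the defining relation of the bracket, and
   it forces the torsion to be totally skew.  Finally the centre is k, because V
   has no trivial submodule, and nabla vanishes on k. *)

From HB Require Import structures.
From mathcomp Require Import all_boot all_order all_algebra.
From mathcomp Require Import reals.
From mathcomp Require Import lra.
Set Implicit Arguments.
Unset Strict Implicit.
Unset Printing Implicit Defensive.
Import Order.TTheory GRing.Theory Num.Theory.
Local Open Scope ring_scope.

Section Forms.
Variables (R : realType) (k : nat) (G : 'M[R]_k).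

Lemma ipDl x y z : ip G (x + y) z = ip G x z + ip G y z.
Proof. by rewrite /ip !mulmxDl mxE. Qed.

Lemma ipZl a x z : ip G (a *: x) z = a * ip G x z.
Proof. by rewrite /ip -!scalemxAl mxE. Qed.

Lemma ipNl x z : ip G (- x) z = - ip G x z.
Proof. by rewrite -scaleN1r ipZl mulN1r. Qed.

Lemma ipBl x y z : ip G (x - y) z = ip G x z - ip G y z.
Proof. by rewrite ipDl ipNl. Qed.

Lemma ip0l z : ip G 0 z = 0.
Proof. by rewrite /ip !mul0mx mxE. Qed.

Lemma ip_suml I (r : seq I) (P : pred I) (F : I -> 'rV[R]_k) z :
  ip G (\sum_(i <- r | P i) F i) z = \sum_(i <- r | P i) ip G (F i) z.
Proof. by rewrite /ip !mulmx_suml summxE. Qed.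

Lemma ipC : G^T = G -> forall x y, ip G x y = ip G y x.
Proof.
move=> G_sym x y; rewrite /ip -[in LHS](trmxK (x *m G *m y^T)) [in LHS]mxE.
by rewrite !trmx_mul trmxK G_sym mulmxA.
Qed.

Lemma ipNr : G^T = G -> forall x y, ip G x (- y) = - ip G x y.
Proof. by move=> G_sym x y; rewrite ipC // ipNl ipC. Qed.

Lemma ip0r : G^T = G -> forall x, ip G x 0 = 0.
Proof. by move=> G_sym x; rewrite ipC // ip0l. Qed.

Lemma scalar_product_inj x y :
  scalar_product G -> (forall z, ip G x z = ip G y z) -> x = y.
Proof.
move=> [_ G_pos] xy; apply/eqP; rewrite -subr_eq0; apply/negPn/negP => /G_pos.
by rewrite ipBl xy subrr ltxx.
Qed.

End Forms.

Section Representation.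
Variables (R : realType) (m n : nat) (A : 'I_m -> 'M[R]_n).
Local Notation phi := (phiM A).

Lemma phiM_is_linear : linear phi.
Proof.
move=> a K L; rewrite /phiM scaler_sumr -big_split; apply: eq_bigr => i _.
by rewrite !mxE scalerDl scalerA.
Qed.

HB.instance Definition _ := GRing.isLinear.Build R 'rV[R]_m 'M[R]_n _ phi phiM_is_linear.

Lemma phiM_commr (M : 'M[R]_n) K :
  (forall i, A i *m M = M *m A i) -> phi K *m M = M *m phi K.
Proof.
move=> AM; rewrite /phiM mulmx_suml mulmx_sumr; apply: eq_bigr => i _.
by rewrite -scalemxAl -scalemxAr AM.
Qed.

Lemma phiM_comm K L :
  (forall i j, A i *m A j = A j *m A i) -> phi K *m phi L = phi L *m phi K.
Proof. by move=> A_comm; apply: phiM_commr => i; rewrite phiM_commr. Qed.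

Lemma phiM_skew (Gv : 'M[R]_n) K v w :
  Gv^T = Gv -> (forall i v w, ip Gv (v *m A i) w = - ip Gv v (w *m A i)) ->
  ip Gv (v *m phi K) w = - ip Gv v (w *m phi K).
Proof.
move=> Gv_sym A_skew; rewrite /phiM !mulmx_sumr ip_suml (ipC Gv_sym v) ip_suml.
rewrite -sumrN; apply: eq_bigr => i _.
by rewrite -!scalemxAr !ipZl A_skew (ipC Gv_sym v) mulrN.
Qed.

End Representation.

Definition is_derivation (V : zmodType) (mul : V -> V -> V) (D : V -> V) :=
  forall x y, D (mul x y) = mul (D x) y + mul x (D y).

Definition is_derivation3 (V : zmodType) (t : V -> V -> V -> V) (D : V -> V) :=
  forall x y z, D (t x y z) = t (D x) y z + t x (D y) z + t x y (D z).

Section Derivations.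
Variables (V : zmodType) (D : V -> V).
Hypothesis D_B : {morph D : x y / x - y}.

Lemma derivationB f g : is_derivation f D -> is_derivation g D ->
  is_derivation (fun x y => f x y - g x y) D.
Proof. by move=> Df Dg x y; rewrite D_B Df Dg opprD addrACA. Qed.

Lemma derivation_flip f : is_derivation f D -> is_derivation (fun x y => f y x) D.
Proof. by move=> Df x y; rewrite Df addrC. Qed.

Lemma derivation3B t s : is_derivation3 t D -> is_derivation3 s D ->
  is_derivation3 (fun x y z => t x y z - s x y z) D.
Proof.
move=> Dt Ds x y z; rewrite D_B Dt Ds !opprD addrACA.
by congr (_ + _); rewrite addrACA.
Qed.

Lemma derivation3_flip t :
  is_derivation3 t D -> is_derivation3 (fun x y z => t y x z) D.
Proof. by move=> Dt x y z; rewrite Dt [t (D y) _ _ + _]addrC. Qed.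

Lemma derivation3_compr f g : (forall x, {morph f x : y z / y + z}) ->
  is_derivation f D -> is_derivation g D ->
  is_derivation3 (fun x y z => f x (g y z)) D.
Proof. by move=> fD Df Dg x y z; rewrite Df Dg fD addrA. Qed.

Lemma derivation3_compl f g : (forall z, {morph f^~ z : x y / x + y}) ->
  is_derivation f D -> is_derivation g D ->
  is_derivation3 (fun x y z => f (g x y) z) D.
Proof. by move=> fD Df Dg x y z; rewrite Df Dg fD. Qed.

Lemma derivation_sub_eq0 f : is_derivation f D ->
  forall x y, D (f x y) - f (D x) y - f x (D y) = 0.
Proof. by move=> Df x y; rewrite Df addrAC addrK subrr. Qed.

Lemma derivation3_sub_eq0 t : is_derivation3 t D ->
  forall x y z, D (t x y z) - t (D x) y z - t x (D y) z - t x y (D z) = 0.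
Proof. by move=> Dt x y z; rewrite Dt -addrA -opprD -addrA -opprD addrA subrr. Qed.

End Derivations.

HB.instance Definition _ (R : realType) (m n : nat) := GRing.Lmodule.on (nT R m n).

Section Connections.
Variables (R : realType) (m n : nat) (br : 'rV[R]_n -> 'rV[R]_n -> 'rV[R]_m).
Variable nab : nT R m n -> nT R m n -> nT R m n.
Hypothesis nab_bilinear : bilinear_conn nab.

Lemma connDl Z : {morph nab^~ Z : X Y / X + Y}.
Proof. by case: nab_bilinear => linl _ X Y; have := linl 1 X Y Z; rewrite !scale1r. Qed.

Lemma connDr X : {morph nab X : Y Z / Y + Z}.
Proof. by case: nab_bilinear => _ linr Y Z; have := linr 1 X Y Z; rewrite !scale1r. Qed.

Lemma connBr X : {morph nab X : Y Z / Y - Z}.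
Proof.
case: nab_bilinear => _ linr Y Z.
by rewrite addrC -scaleN1r linr scaleN1r addrC.
Qed.

Hypothesis Dbr : forall W, is_derivation (nbr br) (nab W).
Hypothesis Dnab : forall W, is_derivation nab (nab W).

Lemma parallel_torsion_of_derivations : parallel_torsion br nab.
Proof.
move=> W X Y.
have DT : is_derivation (torsion br nab) (nab W).
  exact: (derivationB (f := fun X Y => nab X Y - nab Y X) (g := nbr br) (connBr W)
    (derivationB (connBr W) (Dnab W) (derivation_flip (Dnab W))) (Dbr W)).
exact: (derivation_sub_eq0 DT X Y).
Qed.

Lemma parallel_curvature_of_derivations : parallel_curvature br nab.
Proof.
move=> W X Y Z.
have DR : is_derivation3 (curvature br nab) (nab W).
  have Dnn := derivation3_compr (@connDr) (Dnab W) (Dnab W).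
  exact: (derivation3B (t := fun X Y Z => nab X (nab Y Z) - nab Y (nab X Z))
    (s := fun X Y Z => nab (nbr br X Y) Z) (connBr W)
    (derivation3B (connBr W) Dnn (derivation3_flip Dnn))
    (derivation3_compl (@connDl) (Dnab W) (Dbr W))).
exact: (derivation3_sub_eq0 DR X Y Z).
Qed.

Lemma skew_torsion_of_formula (Gk : 'M[R]_m) (Gv : 'M[R]_n) :
  (forall v w, br v w = - br w v) ->
  (forall X Y Z, ng Gk Gv (torsion br nab X Y) Z =
     - ng Gk Gv (nbr br X Y) Z - ng Gk Gv (nbr br Y Z) X - ng Gk Gv (nbr br Z X) Y) ->
  skew_torsion Gk Gv br nab.
Proof.
move=> brC T_formula X Y Z; rewrite !T_formula /ng /nbr /= !ip0l !addr0.
rewrite (brC X.2 Z.2) (brC Z.2 Y.2) (brC Y.2 X.2) !ipNl.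
lra.
Qed.

End Connections.

Section KNilpotent.
Variables (R : realType) (m n : nat) (Gk : 'M[R]_m) (Gv : 'M[R]_n).
Variables (J : 'M[R]_n) (A : 'I_m -> 'M[R]_n) (br : 'rV[R]_n -> 'rV[R]_n -> 'rV[R]_m).
Hypotheses (Gk_sp : scalar_product Gk) (Gv_sp : scalar_product Gv).
Hypothesis A_comm : forall i j, A i *m A j = A j *m A i.
Hypothesis A_skew : forall i v w, ip Gv (v *m A i) w = - ip Gv v (w *m A i).
Hypothesis A_J : forall i, A i *m J = J *m A i.
Hypothesis no_trivial : forall v, (forall K, act A K v = 0) -> v = 0.
Hypothesis br_def : forall v1 v2 K, ip Gk (br v1 v2) K = ip Gv (v1 *m phiM A K) v2.

Let Gk_sym : Gk^T = Gk := proj1 Gk_sp.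
Let Gv_sym : Gv^T = Gv := proj1 Gv_sp.
Let phi_skew K v w := phiM_skew K v w Gv_sym A_skew.

Lemma brNl v w : br (- v) w = - br v w.
Proof. by apply: (scalar_product_inj Gk_sp) => K; rewrite ipNl !br_def mulNmx ipNl. Qed.

Lemma brNr v w : br v (- w) = - br v w.
Proof. by apply: (scalar_product_inj Gk_sp) => K; rewrite ipNl !br_def ipNr. Qed.

Lemma brC v w : br v w = - br w v.
Proof.
by apply: (scalar_product_inj Gk_sp) => K; rewrite ipNl !br_def phi_skew ipC ?opprK.
Qed.

Lemma br_phiM_invariant W v w : br (v *m phiM A W) w + br v (w *m phiM A W) = 0.
Proof.
apply: (scalar_product_inj Gk_sp) => K; rewrite ipDl ip0l !br_def.
rewrite -[ip Gv (v *m _) (w *m _)]opprK -phi_skew.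
by rewrite -!mulmxA (phiM_comm _ _ A_comm) subrr.
Qed.

Lemma br_lker0 v : (forall w, br v w = 0) -> v = 0.
Proof.
move=> v0; apply: no_trivial => K.
by apply: (scalar_product_inj Gv_sp) => w; rewrite -br_def v0 !ip0l.
Qed.

Definition rep_conn (X Y : nT R m n) : nT R m n := (0, - (Y.2 *m phiM A X.1)).

Lemma rep_conn_bilinear : bilinear_conn rep_conn.
Proof.
split=> a X Y Z; apply: injective_projections => /=; rewrite ?scaler0 ?addr0 //.
  by rewrite linearP mulmxDr -scalemxAr opprD scalerN.
by rewrite mulmxDl -scalemxAl opprD scalerN.
Qed.

Lemma rep_conn_metric : metric_conn Gk Gv rep_conn.
Proof.
move=> X Y Z; rewrite /ng /= ip0l ip0r // ipNl ipNr // phi_skew.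
by rewrite !add0r opprK subrr.
Qed.

Lemma rep_conn_derivation W : is_derivation rep_conn (rep_conn W).
Proof.
move=> X Y; apply: injective_projections => /=; rewrite ?addr0 //.
by rewrite linear0 mulmx0 oppr0 add0r !mulNmx -!mulmxA (phiM_comm _ _ A_comm).
Qed.

Lemma rep_conn_derivation_br W : is_derivation (nbr br) (rep_conn W).
Proof.
move=> X Y; apply: injective_projections => /=; rewrite ?addr0 ?mul0mx ?oppr0 //.
by rewrite brNl brNr -opprD br_phiM_invariant oppr0.
Qed.

Lemma rep_conn_parallel_I : parallel_I J rep_conn.
Proof.
move=> X Y; apply: injective_projections => //=.
by rewrite mulNmx -!mulmxA (phiM_commr _ A_J).
Qed.

Lemma rep_conn_central U X : central br U -> rep_conn X U = 0.
Proof.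
move=> U_central; suff U2_0 : U.2 = 0 by rewrite /rep_conn U2_0 mul0mx oppr0.
by apply: br_lker0 => w; have := congr1 fst (U_central (0, w)).
Qed.

Lemma torsion_rep_conn X Y :
  torsion br rep_conn X Y = (- br X.2 Y.2, X.2 *m phiM A Y.1 - Y.2 *m phiM A X.1).
Proof.
apply: injective_projections => /=; first by rewrite subrr sub0r.
by rewrite subr0 opprK addrC.
Qed.

Lemma rep_conn_torsion_formula X Y Z :
  ng Gk Gv (torsion br rep_conn X Y) Z =
    - ng Gk Gv (nbr br X Y) Z - ng Gk Gv (nbr br Y Z) X - ng Gk Gv (nbr br Z X) Y.
Proof.
rewrite torsion_rep_conn /ng /nbr /= !ip0l !addr0 ipNl ipBl !br_def.
by rewrite (phi_skew Y.1 Z.2) (ipC Gv_sym Z.2); lra.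
Qed.

End KNilpotent.

Theorem proposition8p4 (R : realType) (m n : nat)
    (Gk : 'M[R]_m) (Gv : 'M[R]_n) (J : 'M[R]_n) (A : 'I_m -> 'M[R]_n)
    (br : 'rV[R]_n -> 'rV[R]_n -> 'rV[R]_m) :
  (* scalar products on k (bi-invariant: automatic, k abelian) and on V *)
  scalar_product Gk -> scalar_product Gv ->
  (* (V, I, <,>_V) Hermitian: I complex structure, orthogonal *)
  J *m J = - 1%:M ->
  (forall v w : 'rV[R]_n, ip Gv (v *m J) (w *m J) = ip Gv v w) ->
  (* phi : k -> u(V,I,<,>_V) is a Lie algebra representation of abelian k *)
  (forall i j, A i *m A j = A j *m A i) ->
  (forall i, A i *m J = J *m A i) ->
  (forall i (v w : 'rV[R]_n), ip Gv (v *m A i) w = - ip Gv v (w *m A i)) ->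
  (* no trivial submodules *)
  (forall v : 'rV[R]_n, (forall K : 'rV[R]_m, act A K v = 0) -> v = 0) ->
  (* the bracket V x V -> k of the triple *)
  (forall (v1 v2 : 'rV[R]_n) (K : 'rV[R]_m), ip Gk (br v1 v2) K = ip Gv (act A K v1) v2) ->
  exists nab : nT R m n -> nT R m n -> nT R m n,
    bilinear_conn nab /\
        metric_conn Gk Gv nab /\
        parallel_torsion br nab /\
        parallel_curvature br nab /\
        skew_torsion Gk Gv br nab /\
        parallel_I J nab /\
        (forall U X : nT R m n, central br U -> nab X U = 0) /\
        (forall X Y Z : nT R m n,
           ng Gk Gv (torsion br nab X Y) Z =
             - ng Gk Gv (nbr br X Y) Z - ng Gk Gv (nbr br Y Z) X
             - ng Gk Gv (nbr br Z X) Y).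
Proof.
move=> Gk_sp Gv_sp _ _ A_comm A_J A_skew no_trivial br_def.
have nab_bilinear := rep_conn_bilinear A.
have Dbr := rep_conn_derivation_br Gk_sp Gv_sp A_comm A_skew br_def.
have Dnab := rep_conn_derivation A_comm.
have T_formula := rep_conn_torsion_formula Gv_sp A_skew br_def.
exists (rep_conn A); split; first exact: nab_bilinear.
split; first exact: rep_conn_metric Gk_sp Gv_sp A_skew.
split; first exact: parallel_torsion_of_derivations nab_bilinear Dbr Dnab.
split; first exact: parallel_curvature_of_derivations nab_bilinear Dbr Dnab.
split; first exact: skew_torsion_of_formula (brC Gk_sp Gv_sp A_skew br_def) T_formula.
split; first exact: rep_conn_parallel_I A_J.
split; first exact: rep_conn_central Gv_sp no_trivial br_def.
exact: T_formula.
Qed.
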